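(* Let $V$ be a commutative unital quantale whose underlying lattice is a frame. The category $\mathsf{VGrp}$ is a regular category in the sense of Barr. Moreover, when $V$ is integral (i.e. $k=\top$), $\mathsf{VGrp}$ is normal: it is pointed and every regular epimorphism is a cokernel.
   Context: A commutative unital quantale $V$ is a complete lattice with a commutative associative operation $\otimes$ with unit $k$ preserving arbitrary joins in each variable; standing assumption: as a lattice $V$ is a frame (binary meets distribute over arbitrary joins). A $V$-category $(X,a)$: $a\colon X\times X\to V$ with $k\le a(x,x)$ and $a(x,x')\otimes a(x',x'')\le a(x,x'')$. A $V$-group $(X,a,+)$ is a $V$-category with a group structure (additive, not necessarily abelian) such that $a(x_1,x_2)\otimes a(x_1',x_2')\le a(x_1+x_1',x_2+x_2')$; $V$-homomorphisms are group homomorphisms $f$ with $a(x,x')\le b(f(x),f(x'))$; category $\mathsf{VGrp}$. A regular category (Barr) is a finitely complete category with coequalizers of kernel pairs in which regular epimorphisms are stable under pullback. *)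

From Stdlib Require Import Setoid.

Set Implicit Arguments.
Unset Strict Implicit.

Record quantale := Quantale {
  qcar :> Type;
  qle : qcar -> qcar -> Prop;
  qsup : (qcar -> Prop) -> qcar;
  qtensor : qcar -> qcar -> qcar;
  qk : qcar;
  qle_refl : forall x, qle x x;
  qle_trans : forall x y z, qle x y -> qle y z -> qle x z;
  qle_antisym : forall x y, qle x y -> qle y x -> x = y;
  qsup_ub : forall (S : qcar -> Prop) x, S x -> qle x (qsup S);
  qsup_least : forall (S : qcar -> Prop) y,
      (forall x, S x -> qle x y) -> qle (qsup S) y;
  qtensorC : forall x y, qtensor x y = qtensor y x;
  qtensorA : forall x y z, qtensor x (qtensor y z) = qtensor (qtensor x y) z;
  qtensor1l : forall x, qtensor qk x = x;
  qtensor1r : forall x, qtensor x qk = x;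
  qtensor_supl : forall (S : qcar -> Prop) a,
      qtensor (qsup S) a = qsup (fun y => exists s, S s /\ y = qtensor s a);
  qtensor_supr : forall a (S : qcar -> Prop),
      qtensor a (qsup S) = qsup (fun y => exists s, S s /\ y = qtensor a s);
  (* frame law: binary meets distribute over arbitrary joins; the binary meet
     is the join of all common lower bounds *)
  qframe : forall a (S : qcar -> Prop),
      qsup (fun c => qle c a /\ qle c (qsup S)) =
      qsup (fun y => exists s, S s /\
                 y = qsup (fun c => qle c a /\ qle c s))
}.

Definition qmeet (V : quantale) (a b : V) : V :=
  qsup (fun c => qle c a /\ qle c b).
Definition qtop (V : quantale) : V := qsup (fun _ => True).

Definition integral (V : quantale) : Prop := qk V = qtop V.

Record vgroup (V : quantale) := VGroup {
  gcar :> Type;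
  gdist : gcar -> gcar -> V;
  gadd : gcar -> gcar -> gcar;
  gzero : gcar;
  gopp : gcar -> gcar;
  gaddA : forall x y z, gadd x (gadd y z) = gadd (gadd x y) z;
  gadd0l : forall x, gadd gzero x = x;
  gadd0r : forall x, gadd x gzero = x;
  gaddNl : forall x, gadd (gopp x) x = gzero;
  gaddNr : forall x, gadd x (gopp x) = gzero;
  gdist_refl : forall x, qle (qk V) (gdist x x);
  gdist_trans : forall x y z,
      qle (qtensor (gdist x y) (gdist y z)) (gdist x z);
  gdist_add : forall x1 x2 y1 y2,
      qle (qtensor (gdist x1 x2) (gdist y1 y2))
          (gdist (gadd x1 y1) (gadd x2 y2))
}.

Record vhom (V : quantale) (X Y : vgroup V) := VHom {
  hfun :> X -> Y;
  hfun_add : forall x y, hfun (gadd x y) = gadd (hfun x) (hfun y);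
  hfun_dist : forall x y, qle (gdist x y) (gdist (hfun x) (hfun y))
}.

Record category := Category {
  Obj : Type;
  Hom : Obj -> Obj -> Type;
  heq : forall A B, Hom A B -> Hom A B -> Prop;
  cid : forall A, Hom A A;
  comp : forall A B C, Hom B C -> Hom A B -> Hom A C;  (* comp g f = g o f *)
  heq_refl : forall A B (f : Hom A B), heq f f;
  heq_sym : forall A B (f g : Hom A B), heq f g -> heq g f;
  heq_trans : forall A B (f g h : Hom A B), heq f g -> heq g h -> heq f h;
  comp_heq : forall A B C (g g' : Hom B C) (f f' : Hom A B),
      heq g g' -> heq f f' -> heq (comp g f) (comp g' f');
  compA : forall A B C D (h : Hom C D) (g : Hom B C) (f : Hom A B),
      heq (comp h (comp g f)) (comp (comp h g) f);
  comp1l : forall A B (f : Hom A B), heq (comp (cid B) f) f;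
  comp1r : forall A B (f : Hom A B), heq (comp f (cid A)) f
}.

Arguments heq {c A B}.
Arguments cid {c}.
Arguments comp {c A B C}.

Section CatDefs.
Variable C : category.

Definition is_terminal (T : Obj C) : Prop :=
  forall X : Obj C, exists h : Hom X T, forall h' : Hom X T, heq h' h.

Definition is_initial (I : Obj C) : Prop :=
  forall X : Obj C, exists h : Hom I X, forall h' : Hom I X, heq h' h.

Definition is_zero_object (Z : Obj C) : Prop := is_initial Z /\ is_terminal Z.

Definition is_product (A B P : Obj C) (p1 : Hom P A) (p2 : Hom P B) : Prop :=
  forall (Z : Obj C) (u : Hom Z A) (v : Hom Z B),
    exists w : Hom Z P, heq (comp p1 w) u /\ heq (comp p2 w) v /\
      forall w' : Hom Z P, heq (comp p1 w') u -> heq (comp p2 w') v -> heq w' w.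

Definition is_equalizer (A B E : Obj C) (f g : Hom A B) (e : Hom E A) : Prop :=
  heq (comp f e) (comp g e) /\
  forall (Z : Obj C) (u : Hom Z A), heq (comp f u) (comp g u) ->
    exists w : Hom Z E, heq (comp e w) u /\
      forall w' : Hom Z E, heq (comp e w') u -> heq w' w.

Definition is_pullback (A B X P : Obj C) (f : Hom A X) (g : Hom B X)
    (p1 : Hom P A) (p2 : Hom P B) : Prop :=
  heq (comp f p1) (comp g p2) /\
  forall (Z : Obj C) (u : Hom Z A) (v : Hom Z B), heq (comp f u) (comp g v) ->
    exists w : Hom Z P, heq (comp p1 w) u /\ heq (comp p2 w) v /\
      forall w' : Hom Z P, heq (comp p1 w') u -> heq (comp p2 w') v -> heq w' w.

Definition is_coequalizer (A B Q : Obj C) (f g : Hom A B) (q : Hom B Q) : Prop :=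
  heq (comp q f) (comp q g) /\
  forall (Z : Obj C) (u : Hom B Z), heq (comp u f) (comp u g) ->
    exists w : Hom Q Z, heq (comp w q) u /\
      forall w' : Hom Q Z, heq (comp w' q) u -> heq w' w.

Definition has_terminal : Prop := exists T, is_terminal T.
Definition has_binary_products : Prop :=
  forall A B : Obj C, exists P (p1 : Hom P A) (p2 : Hom P B), is_product p1 p2.
Definition has_equalizers : Prop :=
  forall (A B : Obj C) (f g : Hom A B), exists E (e : Hom E A), is_equalizer f g e.
Definition has_pullbacks : Prop :=
  forall (A B X : Obj C) (f : Hom A X) (g : Hom B X),
    exists P (p1 : Hom P A) (p2 : Hom P B), is_pullback f g p1 p2.

(* finite completeness: terminal object, binary products and equalizers
   (hence all finite limits); pullbacks are listed explicitly as well *)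
Definition finitely_complete : Prop :=
  has_terminal /\ has_binary_products /\ has_equalizers /\ has_pullbacks.

Definition regular_epi (B Q : Obj C) (e : Hom B Q) : Prop :=
  exists (A : Obj C) (f g : Hom A B), is_coequalizer f g e.

Definition kernel_pairs_have_coequalizers : Prop :=
  forall (A B P : Obj C) (f : Hom A B) (p1 p2 : Hom P A),
    is_pullback f f p1 p2 -> exists Q (q : Hom A Q), is_coequalizer p1 p2 q.

Definition regular_epis_pullback_stable : Prop :=
  forall (A B X P : Obj C) (g : Hom A X) (e : Hom B X)
         (p1 : Hom P A) (p2 : Hom P B),
    regular_epi e -> is_pullback g e p1 p2 -> regular_epi p1.

Definition regular : Prop :=
  finitely_complete /\ kernel_pairs_have_coequalizers /\
  regular_epis_pullback_stable.

Definition pointed : Prop := exists Z, is_zero_object Z.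

(* e : B -> Q is a cokernel (w.r.t. the zero object Z): it is the coequalizer
   of some f : A -> B and the zero morphism A -> Z -> B *)
Definition is_cokernel (Z : Obj C) (B Q : Obj C) (e : Hom B Q) : Prop :=
  exists (A : Obj C) (f : Hom A B) (z1 : Hom A Z) (z2 : Hom Z B),
    is_coequalizer f (comp z2 z1) e.

Definition normal : Prop :=
  exists Z, is_zero_object Z /\
    forall (B Q : Obj C) (e : Hom B Q), regular_epi e -> is_cokernel Z e.

End CatDefs.

Section VGrpCat.
Variable V : quantale.

Definition vheq (X Y : vgroup V) (f g : vhom X Y) : Prop := forall x, f x = g x.

Definition vid (X : vgroup V) : vhom X X.
Proof.
refine (@VHom V X X (fun x => x) _ _); intros; [reflexivity | apply qle_refl].
Defined.

Definition vcomp (X Y Z : vgroup V) (g : vhom Y Z) (f : vhom X Y) : vhom X Z.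
Proof.
refine (@VHom V X Z (fun x => g (f x)) _ _); intros.
- rewrite (hfun_add f), (hfun_add g); reflexivity.
- eapply qle_trans; [apply (hfun_dist f) | apply (hfun_dist g)].
Defined.

Definition VGrp : category.
Proof.
refine (@Category (vgroup V) (@vhom V) vheq vid vcomp _ _ _ _ _ _ _);
  unfold vheq; simpl; intros.
- reflexivity.
- symmetry; auto.
- etransitivity; eauto.
- rewrite H0, H; reflexivity.
- reflexivity.
- reflexivity.
- reflexivity.
Defined.

End VGrpCat.

From Stdlib Require Import ProofIrrelevance ClassicalEpsilon.

(* Limits in VGrp are computed as for groups, products carrying the meet of
   the two distances.  A homomorphism e : B -> X is a regular epimorphism
   exactly when it is surjective and X carries the final structure,
   a(y1, y2) = \/ { a(b1, b2) | e b1 = y1, e b2 = y2 }; such an e is the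
   coequalizer of its kernel pair, and when k is the top element also the
   cokernel of its kernel.  The image of f with its final structure is the
   coequalizer of the kernel pair of f, and pulling back along any map keeps
   surjectivity and, by the frame law, finality. *)

Set Implicit Arguments.
Unset Strict Implicit.

Lemma sig_inj (A : Type) (P : A -> Prop) (u v : {a | P a}) :
  proj1_sig u = proj1_sig v -> u = v.
Proof. apply eq_sig_hprop; intros; apply proof_irrelevance. Qed.

Section VGrpRegular.
Variable V : quantale.

Lemma qtensor_monol (a b c : V) : qle a b -> qle (qtensor a c) (qtensor b c).
Proof.
  intros Hab.
  assert (Eb : b = qsup (fun x => x = a \/ x = b)).
  { apply qle_antisym; [apply qsup_ub; auto|].
    apply qsup_least; intros x [-> | ->]; [exact Hab | apply qle_refl]. }
  rewrite Eb, qtensor_supl. apply qsup_ub. exists a; auto.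
Qed.

Lemma qtensor_mono (a a' b b' : V) :
  qle a a' -> qle b b' -> qle (qtensor a b) (qtensor a' b').
Proof.
  intros Ha Hb. apply qle_trans with (qtensor a' b); [now apply qtensor_monol|].
  rewrite (qtensorC a' b), (qtensorC a' b'). now apply qtensor_monol.
Qed.

Lemma qtensor_sup_le (S T : V -> Prop) (y : V) :
  (forall s t, S s -> T t -> qle (qtensor s t) y) ->
  qle (qtensor (qsup S) (qsup T)) y.
Proof.
  intros H. rewrite qtensor_supl. apply qsup_least. intros x [s [Hs ->]].
  rewrite qtensor_supr. apply qsup_least. intros x [t [Ht ->]]. auto.
Qed.

Lemma qmeet_lel (a b : V) : qle (qmeet a b) a.
Proof. apply qsup_least; intros c [H _]; exact H. Qed.

Lemma qmeet_ler (a b : V) : qle (qmeet a b) b.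
Proof. apply qsup_least; intros c [_ H]; exact H. Qed.

Lemma qmeet_glb (a b c : V) : qle c a -> qle c b -> qle c (qmeet a b).
Proof. intros; apply qsup_ub; auto. Qed.

Lemma qtop_ge (x : V) : qle x (qtop V).
Proof. apply qsup_ub; exact I. Qed.

Lemma qmeet_sup_le (a : V) (S : V -> Prop) (y : V) :
  (forall s, S s -> qle (qmeet a s) y) -> qle (qmeet a (qsup S)) y.
Proof.
  intros H. unfold qmeet. rewrite qframe. apply qsup_least.
  intros x [s [Hs ->]]. now apply H.
Qed.

Lemma gadd_cancel_l (X : vgroup V) (a b c : X) : gadd a b = gadd a c -> b = c.
Proof.
  intros H. rewrite <- (gadd0l b), <- (gadd0l c), <- (gaddNl a), <- !gaddA, H.
  reflexivity.
Qed.

Lemma gsub_eq0 (X : vgroup V) (a c : X) : gadd a (gopp c) = gzero X -> a = c.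
Proof.
  intros H. rewrite <- (gadd0r a), <- (gaddNl c), gaddA, H, gadd0l. reflexivity.
Qed.

Lemma hfun_zero (X Y : vgroup V) (f : vhom X Y) : f (gzero X) = gzero Y.
Proof.
  apply (@gadd_cancel_l _ (f (gzero X))).
  rewrite <- hfun_add, gadd0l, gadd0r. reflexivity.
Qed.

Lemma hfun_opp (X Y : vgroup V) (f : vhom X Y) (x : X) : f (gopp x) = gopp (f x).
Proof.
  apply (@gadd_cancel_l _ (f x)). rewrite <- hfun_add, !gaddNr, hfun_zero.
  reflexivity.
Qed.

Lemma gdist_addr (X : vgroup V) (x y t : X) :
  qle (gdist x y) (gdist (gadd x t) (gadd y t)).
Proof.
  eapply qle_trans; [|apply gdist_add].
  rewrite <- (qtensor1r (gdist x y)) at 1.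
  apply qtensor_mono; [apply qle_refl | apply gdist_refl].
Qed.

Record is_subgroup (X : vgroup V) (P : X -> Prop) : Prop := {
  subgroup0 : P (gzero X);
  subgroupD : forall x y, P x -> P y -> P (gadd x y);
  subgroupN : forall x, P x -> P (gopp x)
}.

Section Subgroup.
Variables (X : vgroup V) (P : X -> Prop) (HP : is_subgroup P).

Definition sub_add (x y : {x | P x}) : {x | P x} :=
  exist _ (gadd (proj1_sig x) (proj1_sig y))
    (subgroupD HP (proj2_sig x) (proj2_sig y)).

Definition sub_opp (x : {x | P x}) : {x | P x} :=
  exist _ (gopp (proj1_sig x)) (subgroupN HP (proj2_sig x)).

Definition vsubgroup_with (d : {x | P x} -> {x | P x} -> V)
  (drefl : forall x, qle (qk V) (d x x))
  (dtrans : forall x y z, qle (qtensor (d x y) (d y z)) (d x z))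
  (dadd : forall x1 x2 y1 y2,
      qle (qtensor (d x1 x2) (d y1 y2)) (d (sub_add x1 y1) (sub_add x2 y2))) :
  vgroup V.
Proof.
  refine (@VGroup V {x | P x} d sub_add (exist _ (gzero X) (subgroup0 HP))
            sub_opp _ _ _ _ _ drefl dtrans dadd);
    intros; apply sig_inj; simpl.
  - apply gaddA.
  - apply gadd0l.
  - apply gadd0r.
  - apply gaddNl.
  - apply gaddNr.
Defined.

Definition vsubgroup : vgroup V.
Proof.
  refine (@vsubgroup_with (fun x y => gdist (proj1_sig x) (proj1_sig y)) _ _ _);
    intros.
  - apply gdist_refl.
  - apply gdist_trans.
  - apply gdist_add.
Defined.

Definition vsub_incl : vhom vsubgroup X.
Proof.
  refine (@VHom V vsubgroup X (@proj1_sig _ _) _ _); intros.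
  - reflexivity.
  - apply qle_refl.
Defined.

Definition vsub_corestr (Z : vgroup V) (u : vhom Z X) (Hu : forall z, P (u z)) :
  vhom Z vsubgroup.
Proof.
  refine (@VHom V Z vsubgroup (fun z => exist _ (u z) (Hu z)) _ _); intros.
  - apply sig_inj, hfun_add.
  - apply hfun_dist.
Defined.

End Subgroup.

Arguments vsub_corestr [X P] HP [Z] u Hu.

Section Equalizer.
Variables (A B : vgroup V) (f g : vhom A B).

Lemma equalizer_subgroup : is_subgroup (fun x => f x = g x).
Proof.
  split.
  - now rewrite !hfun_zero.
  - intros x y Hx Hy. now rewrite !hfun_add, Hx, Hy.
  - intros x Hx. now rewrite !hfun_opp, Hx.
Qed.

Definition vequalizer : vgroup V := vsubgroup equalizer_subgroup.
Definition veq_incl : vhom vequalizer A := vsub_incl equalizer_subgroup.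

Lemma vequalizer_equalizer : is_equalizer (C:=VGrp V) f g veq_incl.
Proof.
  split.
  - intros [x Hx]. exact Hx.
  - intros Z u Hu. exists (vsub_corestr equalizer_subgroup u Hu). split.
    + intro; reflexivity.
    + intros w Hw z. apply sig_inj, Hw.
Qed.

End Equalizer.

Definition vprod (A B : vgroup V) : vgroup V.
Proof.
  refine (@VGroup V (A * B)
    (fun p q => qmeet (gdist (fst p) (fst q)) (gdist (snd p) (snd q)))
    (fun p q => (gadd (fst p) (fst q), gadd (snd p) (snd q)))
    (gzero A, gzero B) (fun p => (gopp (fst p), gopp (snd p))) _ _ _ _ _ _ _ _).
  - intros [] [] []; simpl; f_equal; apply gaddA.
  - intros []; simpl; f_equal; apply gadd0l.
  - intros []; simpl; f_equal; apply gadd0r.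
  - intros []; simpl; f_equal; apply gaddNl.
  - intros []; simpl; f_equal; apply gaddNr.
  - intros []; simpl; apply qmeet_glb; apply gdist_refl.
  - intros [] [] []; simpl; apply qmeet_glb; eapply qle_trans; try apply gdist_trans;
      apply qtensor_mono; (apply qmeet_lel || apply qmeet_ler).
  - intros [] [] [] []; simpl; apply qmeet_glb; eapply qle_trans; try apply gdist_add;
      apply qtensor_mono; (apply qmeet_lel || apply qmeet_ler).
Defined.

Definition vfst (A B : vgroup V) : vhom (vprod A B) A.
Proof.
  refine (@VHom V (vprod A B) A fst _ _); intros; [reflexivity | apply qmeet_lel].
Defined.

Definition vsnd (A B : vgroup V) : vhom (vprod A B) B.
Proof.
  refine (@VHom V (vprod A B) B snd _ _); intros; [reflexivity | apply qmeet_ler].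
Defined.

Definition vpair (Z A B : vgroup V) (u : vhom Z A) (v : vhom Z B) :
  vhom Z (vprod A B).
Proof.
  refine (@VHom V Z (vprod A B) (fun z => (u z, v z)) _ _); intros; simpl.
  - now rewrite !hfun_add.
  - apply qmeet_glb; apply hfun_dist.
Defined.

Lemma vprod_product (A B : vgroup V) : is_product (C:=VGrp V) (vfst A B) (vsnd A B).
Proof.
  intros Z u v. exists (vpair u v).
  split; [intro; reflexivity | split; [intro; reflexivity |]].
  intros w Hu Hv z. simpl. rewrite <- (Hu z), <- (Hv z). apply surjective_pairing.
Qed.

Definition vunit : vgroup V.
Proof.
  refine (@VGroup V unit (fun _ _ => qtop V) (fun _ _ => tt) tt (fun _ => tt)
            _ _ _ _ _ _ _ _); intros; try apply qtop_ge;
    repeat match goal with u : unit |- _ => destruct u end; reflexivity.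
Defined.

Definition vterm (X : vgroup V) : vhom X vunit.
Proof.
  refine (@VHom V X vunit (fun _ => tt) _ _); intros; [reflexivity | apply qtop_ge].
Defined.

Lemma vunit_terminal : is_terminal (C:=VGrp V) vunit.
Proof. intros X. exists (vterm X). intros h x. now destruct (h x). Qed.

Section Pullback.
Variables (A B X : vgroup V) (g : vhom A X) (e : vhom B X).

Definition vpullback : vgroup V :=
  vequalizer (vcomp g (vfst A B)) (vcomp e (vsnd A B)).
Definition vpb1 : vhom vpullback A := vcomp (vfst A B) (veq_incl _ _).
Definition vpb2 : vhom vpullback B := vcomp (vsnd A B) (veq_incl _ _).

Lemma vpullback_pullback : is_pullback (C:=VGrp V) g e vpb1 vpb2.
Proof.
  split.
  - intros [[a b] H]. exact H.
  - intros Z u v Huv.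
    exists (vsub_corestr (equalizer_subgroup (vcomp g (vfst A B)) (vcomp e (vsnd A B)))
              (vpair u v) Huv).
    split; [intro; reflexivity | split; [intro; reflexivity |]].
    intros w Hu Hv z. apply sig_inj. simpl.
    rewrite <- (Hu z), <- (Hv z). apply surjective_pairing.
Qed.

End Pullback.

Lemma VGrp_finitely_complete : finitely_complete (VGrp V).
Proof.
  split; [|split; [|split]].
  - exists vunit. exact vunit_terminal.
  - intros A B. exists (vprod A B), (vfst A B), (vsnd A B). apply vprod_product.
  - intros A B f g. exists (vequalizer f g), (veq_incl f g). apply vequalizer_equalizer.
  - intros A B X f g. exists (vpullback f g), (vpb1 f g), (vpb2 f g).
    apply vpullback_pullback.
Qed.

Section Image.
Variables (A B : vgroup V) (f : vhom A B).

Definition final_dist (y1 y2 : B) : V :=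
  qsup (fun v => exists x1 x2, f x1 = y1 /\ f x2 = y2 /\ v = gdist x1 x2).

Lemma final_dist_ub (x1 x2 : A) : qle (gdist x1 x2) (final_dist (f x1) (f x2)).
Proof. apply qsup_ub. exists x1, x2; auto. Qed.

Lemma final_dist_le (y1 y2 : B) : qle (final_dist y1 y2) (gdist y1 y2).
Proof.
  apply qsup_least. intros v (x1 & x2 & <- & <- & ->). apply hfun_dist.
Qed.

Definition in_image (y : B) : Prop := exists x, f x = y.

Lemma image_subgroup : is_subgroup in_image.
Proof.
  split.
  - exists (gzero A). apply hfun_zero.
  - intros _ _ [a <-] [b <-]. exists (gadd a b). apply hfun_add.
  - intros _ [a <-]. exists (gopp a). apply hfun_opp.
Qed.

Lemma final_dist_trans (y1 y2 y3 : B) :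
  qle (qtensor (final_dist y1 y2) (final_dist y2 y3)) (final_dist y1 y3).
Proof.
  apply qtensor_sup_le.
  intros s t (x1 & x2 & H1 & H2 & ->) (x2' & x3 & H2' & H3 & ->).
  (* translate the second pair so that it starts at [x2] *)
  set (t0 := gadd (gopp x2') x2).
  eapply qle_trans; [apply qtensor_mono; [apply qle_refl | apply (gdist_addr x2' x3 t0)]|].
  replace (gadd x2' t0) with x2 by (unfold t0; now rewrite gaddA, gaddNr, gadd0l).
  eapply qle_trans; [apply gdist_trans|].
  apply qsup_ub. exists x1, (gadd x3 t0). repeat split; auto.
  unfold t0. rewrite !hfun_add, hfun_opp, H3, H2, <- H2', gaddA,
    <- (gaddA y3), gaddNl, gadd0r. reflexivity.
Qed.

Lemma final_dist_add (y1 y2 z1 z2 : B) :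
  qle (qtensor (final_dist y1 y2) (final_dist z1 z2))
      (final_dist (gadd y1 z1) (gadd y2 z2)).
Proof.
  apply qtensor_sup_le.
  intros s t (x1 & x2 & <- & <- & ->) (x1' & x2' & <- & <- & ->).
  rewrite <- !hfun_add. eapply qle_trans; [apply gdist_add | apply final_dist_ub].
Qed.

Definition vimage : vgroup V.
Proof.
  refine (@vsubgroup_with B in_image image_subgroup
            (fun y1 y2 => final_dist (proj1_sig y1) (proj1_sig y2)) _ _ _); intros.
  - destruct x as [y [x <-]]. eapply qle_trans; [apply (gdist_refl x) | apply final_dist_ub].
  - apply final_dist_trans.
  - apply final_dist_add.
Defined.

Definition vto_image : vhom A vimage.
Proof.
  refine (@VHom V A vimage (fun x => exist in_image (f x) (ex_intro _ x eq_refl)) _ _);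
    intros.
  - apply sig_inj, hfun_add.
  - apply final_dist_ub.
Defined.

Definition vimage_incl : vhom vimage B.
Proof.
  refine (@VHom V vimage B (@proj1_sig _ _) _ _); intros.
  - reflexivity.
  - apply final_dist_le.
Defined.

End Image.

Section QuotientMap.
Variables (B X : vgroup V) (e : vhom B X).

Definition surjective : Prop := forall y, exists b, e b = y.
Definition final : Prop := forall y1 y2, qle (gdist y1 y2) (final_dist e y1 y2).
Definition quotient_map : Prop := surjective /\ final.

Variables (Z : vgroup V) (He : quotient_map) (u : vhom B Z)
  (Hu : forall b b', e b = e b' -> u b = u b').

Definition preimage (y : X) : B :=
  proj1_sig (constructive_indefinite_description _ (proj1 He y)).

Lemma preimage_spec (y : X) : e (preimage y) = y.
Proof. exact (proj2_sig (constructive_indefinite_description _ (proj1 He y))). Qed.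

Definition vlift : vhom X Z.
Proof.
  refine (@VHom V X Z (fun y => u (preimage y)) _ _); intros.
  - rewrite <- hfun_add. apply Hu. now rewrite hfun_add, !preimage_spec.
  - eapply qle_trans; [apply (proj2 He)|]. apply qsup_least.
    intros v (b1 & b2 & H1 & H2 & ->).
    rewrite <- (@Hu b1 (preimage x)), <- (@Hu b2 (preimage y))
      by now rewrite preimage_spec.
    apply hfun_dist.
Defined.

Lemma vlift_comp (b : B) : vlift (e b) = u b.
Proof. apply Hu. now rewrite preimage_spec. Qed.

End QuotientMap.

Lemma quotient_map_factor (P Q X : vgroup V) (p : vhom P X) (q : vhom Q X)
  (w : vhom Q P) : (forall z, p (w z) = q z) -> quotient_map q -> quotient_map p.
Proof.
  intros Hw [Hs Hf]. split.
  - intros y. destruct (Hs y) as [z <-]. now exists (w z).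
  - intros y1 y2. eapply qle_trans; [apply Hf|]. apply qsup_least.
    intros v (z1 & z2 & <- & <- & ->). rewrite <- !Hw.
    eapply qle_trans; [apply hfun_dist | apply final_dist_ub].
Qed.

Lemma vto_image_quotient_map (A B : vgroup V) (f : vhom A B) :
  quotient_map (vto_image f).
Proof.
  split.
  - intros [y [x Hx]]. exists x. now apply sig_inj.
  - intros y1 y2. apply qsup_least. intros v (x1 & x2 & H1 & H2 & ->).
    apply qsup_ub. exists x1, x2. repeat split; now apply sig_inj.
Qed.

Lemma quotient_map_coequalizer (K B X : vgroup V) (h1 h2 : vhom K B) (e : vhom B X) :
  quotient_map e -> (forall k, e (h1 k) = e (h2 k)) ->
  (forall Z (u : vhom B Z), (forall k, u (h1 k) = u (h2 k)) ->
     forall b b', e b = e b' -> u b = u b') ->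
  is_coequalizer (C:=VGrp V) h1 h2 e.
Proof.
  intros He Heh Hker. split; [exact Heh|].
  intros Z u Hu. exists (vlift He (Hker Z u Hu)). split.
  - intro b. apply vlift_comp.
  - intros w Hw y. destruct (proj1 He y) as [b <-].
    transitivity (u b); [exact (Hw b) | symmetry; apply vlift_comp].
Qed.

Lemma regular_epi_quotient_map (B X : vgroup V) (e : vhom B X) :
  regular_epi (C:=VGrp V) e -> quotient_map e.
Proof.
  intros (A & f & g & Hfg & Hcoeq).
  destruct (Hcoeq (vimage e) (vto_image e)) as [w [Hw _]].
  { intro a. apply sig_inj, (Hfg a). }
  destruct (Hcoeq X e Hfg) as [w0 [_ Hw0]].
  (* [vimage_incl e \o w] and the identity both factor [e] through itself *)
  assert (Hincl : forall y, proj1_sig (w y) = y).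
  { intro y. transitivity (w0 y).
    - apply (Hw0 (vcomp (vimage_incl e) w)). intro b. exact (f_equal (@proj1_sig _ _) (Hw b)).
    - symmetry. now apply (Hw0 (vid X)). }
  split.
  - intro y. destruct (proj2_sig (w y)) as [b Hb]. exists b. now rewrite Hb, Hincl.
  - intros y1 y2. eapply qle_trans; [apply (hfun_dist w)|].
    simpl. rewrite !Hincl. apply qle_refl.
Qed.

Lemma vpb1_quotient_map (A B X : vgroup V) (g : vhom A X) (e : vhom B X) :
  quotient_map e -> quotient_map (vpb1 g e).
Proof.
  intros [Hs Hf]. split.
  - intro a. destruct (Hs (g a)) as [b Hb].
    exists (exist _ (a, b) (eq_sym Hb) : vpullback g e). reflexivity.
  - intros a1 a2.
    apply qle_trans with (qmeet (gdist a1 a2) (final_dist e (g a1) (g a2))).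
    { apply qmeet_glb; [apply qle_refl|].
      eapply qle_trans; [apply hfun_dist | apply Hf]. }
    (* the frame law distributes the meet over the join defining [final_dist] *)
    apply qmeet_sup_le. intros s (b1 & b2 & H1 & H2 & ->).
    exact (final_dist_ub (vpb1 g e) (exist _ (a1, b1) (eq_sym H1) : vpullback g e)
                                    (exist _ (a2, b2) (eq_sym H2) : vpullback g e)).
Qed.

Lemma pullback_quotient_map (A B X P : vgroup V) (g : vhom A X) (e : vhom B X)
  (p1 : vhom P A) (p2 : vhom P B) :
  quotient_map e -> is_pullback (C:=VGrp V) g e p1 p2 -> quotient_map p1.
Proof.
  intros He [_ Hpb].
  destruct (Hpb (vpullback g e) (vpb1 g e) (vpb2 g e) (fun z => proj2_sig z))
    as [w [Hw _]].
  exact (quotient_map_factor Hw (vpb1_quotient_map g He)).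
Qed.

Lemma quotient_map_kernel_pair (B X : vgroup V) (e : vhom B X) :
  quotient_map e -> is_coequalizer (C:=VGrp V) (vpb1 e e) (vpb2 e e) e.
Proof.
  intros He. apply quotient_map_coequalizer; [exact He | |].
  - intros z. exact (proj2_sig z).
  - intros Z u Hu b b' Hbb'. exact (Hu (exist _ (b, b') Hbb')).
Qed.

Lemma VGrp_kernel_pairs_have_coequalizers : kernel_pairs_have_coequalizers (VGrp V).
Proof.
  intros A B P f p1 p2 [Hc Hpb]. exists (vimage f), (vto_image f).
  apply quotient_map_coequalizer; [apply vto_image_quotient_map | |].
  - intros k. apply sig_inj, (Hc k).
  - intros Z u Hu b b' Hbb'.
    assert (Hf : f b = f b') by exact (f_equal (@proj1_sig _ _) Hbb').
    destruct (Hpb (vpullback f f) (vpb1 f f) (vpb2 f f) (fun z => proj2_sig z))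
      as [w [Hw1 [Hw2 _]]].
    set (z := exist _ (b, b') Hf : vpullback f f).
    rewrite <- (Hw1 z : p1 (w z) = b), <- (Hw2 z : p2 (w z) = b').
    exact (Hu (w z)).
Qed.

Lemma quotient_map_regular_epi (B X : vgroup V) (e : vhom B X) :
  quotient_map e -> regular_epi (C:=VGrp V) e.
Proof.
  intros He. exists (vpullback e e), (vpb1 e e), (vpb2 e e).
  now apply quotient_map_kernel_pair.
Qed.

Lemma VGrp_regular_epis_pullback_stable : regular_epis_pullback_stable (VGrp V).
Proof.
  intros A B X P g e p1 p2 He Hpb. apply quotient_map_regular_epi.
  exact (pullback_quotient_map (regular_epi_quotient_map He) Hpb).
Qed.

Lemma VGrp_regular : regular (VGrp V).
Proof.
  split; [exact VGrp_finitely_complete | split].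
  - exact VGrp_kernel_pairs_have_coequalizers.
  - exact VGrp_regular_epis_pullback_stable.
Qed.

Section Integral.
Hypothesis HI : integral V.

Definition vinit (X : vgroup V) : vhom vunit X.
Proof.
  refine (@VHom V vunit X (fun _ => gzero X) _ _); intros.
  - symmetry; apply gadd0l.
  - simpl. rewrite <- HI. apply gdist_refl.
Defined.

Lemma vunit_zero_object : is_zero_object (C:=VGrp V) vunit.
Proof.
  split; [|exact vunit_terminal].
  intros X. exists (vinit X). intros h []. exact (hfun_zero h).
Qed.

Lemma quotient_map_cokernel (B X : vgroup V) (e : vhom B X) :
  quotient_map e -> is_cokernel (C:=VGrp V) vunit e.
Proof.
  intros He. set (zero := vcomp (vinit X) (vterm B)).
  exists (vequalizer e zero), (veq_incl e zero), (vterm _), (vinit B).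
  apply quotient_map_coequalizer; [exact He | |].
  - intros [k Hk]. simpl in Hk |- *. now rewrite Hk, hfun_zero.
  - intros Z u Hu b b' Hbb'.
    assert (Hk : e (gadd b (gopp b')) = gzero X)
      by now rewrite hfun_add, hfun_opp, Hbb', gaddNr.
    apply gsub_eq0. rewrite <- hfun_opp, <- hfun_add, <- (hfun_zero u).
    exact (Hu (exist _ _ Hk : vequalizer e zero)).
Qed.

Lemma VGrp_normal : normal (VGrp V).
Proof.
  exists vunit. split; [exact vunit_zero_object|].
  intros B Q e He. now apply quotient_map_cokernel, regular_epi_quotient_map.
Qed.

End Integral.

End VGrpRegular.

Theorem proposition4p3 (V : quantale) :
  regular (VGrp V) /\ (integral V -> normal (VGrp V)).
Proof.
  split.
  - apply VGrp_regular.
  - apply VGrp_normal.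
Qed.
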